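(* Assume (H1)–(H4) and let $H$ be a defining function for $Y$. Let $u$ be an upper semicontinuous viscosity subsolution of $( * )$ on $X$, and suppose $\phi\in C^2$ is such that $u-\phi$ has a strict local maximum at $x\in X$. Then $$\max\{-g(\nabla\phi(x))\det(D^2\phi(x))+f(x),\;-\lambda_1(D^2\phi(x)),\;H(\nabla\phi(x))\}\le 0.$$
   Context: Standing hypotheses (H1)–(H4): (H1) $X,Y\subset\mathbb{R}^n$ are convex, bounded, open domains. (H2) $f\in L^1(X)$ is non-negative and lower semicontinuous. (H3) $g\in L^1(\mathbb{R}^n)$ is positive on $Y$, vanishes on $\mathbb{R}^n\setminus Y$, and is upper semicontinuous. (H4) $\int_X f\,dx=\int_Y g\,dy$. A defining function for $Y$ is a continuous $H:\mathbb{R}^n\to\mathbb{R}$ with $H<0$ on $Y$, $H=0$ on $\partial Y$, $H>0$ on $\mathbb{R}^n\setminus\bar Y$. $\lambda_1(A)$ is the smallest eigenvalue of a symmetric matrix $A$. Equation $( * )$: $\max\{-g(\nabla u)\det(D^2u)+f,-\lambda_1(D^2u),H(\nabla u)\}=0$ in $X$. With $F(x,p,A)=\max\{-g(p)\det A+f(x),-\lambda_1(A),H(p)\}$, an upper semicontinuous $u$ is a viscosity subsolution of $( * )$ if for every $\phi\in C^2$ and $x\in X$ at which $u-\phi$ has a local maximum, $F_*(x,\nabla\phi(x),D^2\phi(x))\le0$, $F_*$ the lower semicontinuous envelope of $F$. *)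

From HB Require Import structures.
From Stdlib Require Import Reals Lra ClassicalEpsilon FunctionalExtensionality.
From mathcomp Require Import all_boot all_algebra.

Set Implicit Arguments.
Unset Strict Implicit.
Unset Printing Implicit Defensive.

Local Open Scope R_scope.

Definition R_eqb (x y : R) : bool := if Req_EM_T x y then true else false.
Lemma R_eqP : Equality.axiom R_eqb.
Proof. move=> x y; rewrite /R_eqb; case: Req_EM_T => h; by constructor. Qed.
HB.instance Definition _ := hasDecEq.Build R R_eqP.

Definition R_find (P : pred R) (_ : nat) : option R :=
  match excluded_middle_informative (exists x, P x) with
  | left h => Some (proj1_sig (constructive_indefinite_description _ h))
  | right _ => None
  end.
Lemma R_find_correct P n x : R_find P n = Some x -> P x.
Proof.
rewrite /R_find; case: excluded_middle_informative => // h [<-].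
exact: proj2_sig (constructive_indefinite_description _ h).
Qed.
Lemma R_find_complete (P : pred R) : (exists x, P x) -> exists n, R_find P n.
Proof. move=> h; exists 0%N; rewrite /R_find; by case: excluded_middle_informative. Qed.
Lemma R_find_ext (P Q : pred R) : P =1 Q -> R_find P =1 R_find Q.
Proof. by move=> /functional_extensionality ->. Qed.
HB.instance Definition _ :=
  hasChoice.Build R R_find_correct R_find_complete R_find_ext.

Lemma R_addA : associative Rplus. Proof. move=> *; ring. Qed.
Lemma R_addC : commutative Rplus. Proof. move=> *; ring. Qed.
Lemma R_add0 : left_id 0 Rplus. Proof. move=> *; ring. Qed.
Lemma R_addN : left_inverse 0 Ropp Rplus. Proof. move=> *; ring. Qed.
HB.instance Definition _ := GRing.isZmodule.Build R R_addA R_addC R_add0 R_addN.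

Lemma R_mulA : associative Rmult. Proof. move=> *; ring. Qed.
Lemma R_mulC : commutative Rmult. Proof. move=> *; ring. Qed.
Lemma R_mul1 : left_id 1 Rmult. Proof. move=> *; ring. Qed.
Lemma R_mulDl : left_distributive Rmult Rplus. Proof. move=> *; ring. Qed.
Lemma R_one_neq0 : (1 != 0 :> R)%B.
Proof. apply/eqP; exact: R1_neq_R0. Qed.
HB.instance Definition _ :=
  GRing.Zmodule_isComNzRing.Build R R_mulA R_mulC R_mul1 R_mulDl R_one_neq0.


Notation vec n := 'rV[R]_n.

Definition vnorm {n : nat} (v : vec n) : R :=
  sqrt (\sum_(i < n) (v ord0 i * v ord0 i))%R.
Definition dist {n : nat} (x y : vec n) : R := vnorm (x - y)%R.

(* Frobenius norm on n x n matrices (all norms are equivalent). *)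
Definition mnorm {n : nat} (A : 'M[R]_n) : R :=
  sqrt (\sum_(i < n) \sum_(j < n) (A i j * A i j))%R.

Definition dotp {n : nat} (p v : vec n) : R := (\sum_(i < n) (p ord0 i * v ord0 i))%R.

Definition symmetric {n : nat} (A : 'M[R]_n) : Prop := (A^T)%R = A.

Definition is_open {n : nat} (S : vec n -> Prop) : Prop :=
  forall x, S x -> exists r, 0 < r /\ forall y, dist y x < r -> S y.

Definition is_convex {n : nat} (S : vec n -> Prop) : Prop :=
  forall x y t, S x -> S y -> 0 <= t <= 1 -> S (x + t *: (y - x))%R.

Definition is_bounded {n : nat} (S : vec n -> Prop) : Prop :=
  exists M, forall x, S x -> vnorm x <= M.

(* (H1): convex, bounded, open domain (a domain is nonempty, open, connected;
   connectedness follows from convexity). *)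
Definition convex_bounded_domain {n : nat} (S : vec n -> Prop) : Prop :=
  (exists x, S x) /\ is_open S /\ is_convex S /\ is_bounded S.

Definition closure {n : nat} (S : vec n -> Prop) (x : vec n) : Prop :=
  forall r, 0 < r -> exists y, S y /\ dist y x < r.

Definition boundary {n : nat} (S : vec n -> Prop) (x : vec n) : Prop :=
  closure S x /\ closure (fun y => ~ S y) x.

Definition lsc_on {n : nat} (S : vec n -> Prop) (h : vec n -> R) : Prop :=
  forall x, S x -> forall eps, 0 < eps ->
    exists delta, 0 < delta /\ forall y, S y -> dist y x < delta -> h x - eps < h y.

Definition usc_on {n : nat} (S : vec n -> Prop) (h : vec n -> R) : Prop :=
  forall x, S x -> forall eps, 0 < eps ->
    exists delta, 0 < delta /\ forall y, S y -> dist y x < delta -> h y < h x + eps.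

Definition continuous_on {n : nat} (S : vec n -> Prop) (h : vec n -> R) : Prop :=
  forall x, S x -> forall eps, 0 < eps ->
    exists delta, 0 < delta /\ forall y, S y -> dist y x < delta -> Rabs (h y - h x) < eps.

Definition whole {n : nat} : vec n -> Prop := fun _ => True.

Definition box_vol {n : nat} (a b : vec n) : R := (\prod_(i < n) (b ord0 i - a ord0 i))%R.

Definition box_cover_le {n : nat} (E : vec n -> Prop) (c : R) : Prop :=
  exists a b : nat -> vec n,
    (forall k i, a k ord0 i <= b k ord0 i) /\
    (forall x, E x -> exists k, forall i, a k ord0 i <= x ord0 i <= b k ord0 i) /\
    (forall N, sum_f_R0 (fun k => box_vol (a k) (b k)) N <= c).

(* Lebesgue outer measure (the greatest lower bound of the covering volumes);
   it is a finite real number for the bounded sets used below. *)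
Definition outer_measure {n : nat} (E : vec n -> Prop) : R :=
  epsilon (inhabits 0) (fun m =>
    (forall c, box_cover_le E c -> m <= c) /\
    (forall m', (forall c, box_cover_le E c -> m' <= c) -> m' <= m)).

Definition distrib {n : nat} (E : vec n -> Prop) (h : vec n -> R) (t : R) : R :=
  outer_measure (fun x => E x /\ t < h x).

(* Riemann sums of the nonincreasing distribution function on [0, N]
   with mesh 1/N (N := k+1). *)
Definition layer_sum {n : nat} (E : vec n -> Prop) (h : vec n -> R) (k : nat) : R :=
  sum_f_R0 (fun j => distrib E h (INR (S j) / INR (S k)) / INR (S k))
           (Nat.pred (S k * S k)).

(* integral over E of the nonnegative function h equals I
   (layer cake: \int_E h = \int_0^oo |{h > t}| dt). *)
Definition has_integral {n : nat} (E : vec n -> Prop) (h : vec n -> R) (I : R) : Prop :=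
  Un_cv (layer_sum E h) I.

(* h is a nonnegative function in L^1(E) (h is semicontinuous below, hence
   Borel measurable, so L^1 amounts to finiteness of the integral). *)
Definition L1_nonneg {n : nat} (E : vec n -> Prop) (h : vec n -> R) : Prop :=
  (forall x, E x -> 0 <= h x) /\ exists I, has_integral E h I.

Definition eigenvalue {n : nat} (A : 'M[R]_n) (l : R) : Prop :=
  exists v : 'cV[R]_n, (v != 0)%R /\ (A *m v = l *: v)%R.

Definition lambda1 {n : nat} (A : 'M[R]_n) : R :=
  epsilon (inhabits 0) (fun l => eigenvalue A l /\ forall mu, eigenvalue A mu -> l <= mu).

Definition is_C2 {n : nat} (phi : vec n -> R) (Dphi : vec n -> vec n)
    (D2phi : vec n -> 'M[R]_n) : Prop :=
  (forall x eps, 0 < eps -> exists delta, 0 < delta /\ forall y, dist y x < delta ->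
      Rabs (phi y - phi x - dotp (Dphi x) (y - x)%R) <= eps * dist y x) /\
  (forall x eps, 0 < eps -> exists delta, 0 < delta /\ forall y, dist y x < delta ->
      vnorm (Dphi y - Dphi x - (y - x) *m D2phi x)%R <= eps * dist y x) /\
  (forall x eps, 0 < eps -> exists delta, 0 < delta /\ forall y, dist y x < delta ->
      mnorm (D2phi y - D2phi x)%R < eps).

Definition defining_function {n : nat} (Y : vec n -> Prop) (H : vec n -> R) : Prop :=
  continuous_on whole H /\
  (forall p, Y p -> H p < 0) /\
  (forall p, boundary Y p -> H p = 0) /\
  (forall p, ~ closure Y p -> 0 < H p).

Definition Fop {n : nat} (f g H : vec n -> R) (x p : vec n) (A : 'M[R]_n) : R :=
  Rmax (Rmax (- g p * (\det A)%R + f x) (- lambda1 A)) (H p).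

(* F_*(x,p,A) <= c, where F_* is the lower semicontinuous envelope of F on
   X x R^n x Sym(n):  liminf_{(y,q,B) -> (x,p,A)} F(y,q,B) <= c. *)
Definition lsc_envelope_le {n : nat} (X : vec n -> Prop)
    (F : vec n -> vec n -> 'M[R]_n -> R) (x p : vec n) (A : 'M[R]_n) (c : R) : Prop :=
  forall delta eps, 0 < delta -> 0 < eps ->
    exists y q B, X y /\ symmetric B /\ dist y x < delta /\ dist q p < delta /\
      mnorm (B - A)%R < delta /\ F y q B < c + eps.

Definition local_max_at {n : nat} (X : vec n -> Prop) (w : vec n -> R) (x : vec n) : Prop :=
  exists r, 0 < r /\ forall y, X y -> dist y x < r -> w y <= w x.

Definition strict_local_max_at {n : nat} (X : vec n -> Prop) (w : vec n -> R) (x : vec n) : Prop :=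
  exists r, 0 < r /\ forall y, X y -> dist y x < r -> y <> x -> w y < w x.

Definition viscosity_subsolution {n : nat} (X : vec n -> Prop) (f g H : vec n -> R)
    (u : vec n -> R) : Prop :=
  usc_on X u /\
  forall phi Dphi D2phi, is_C2 phi Dphi D2phi ->
    forall x, X x -> local_max_at X (fun y => u y - phi y) x ->
      lsc_envelope_le X (Fop f g H) x (Dphi x) (D2phi x) 0.

(* A strict local maximum is in particular a local maximum, so the viscosity
   inequality bounds the lower semicontinuous envelope of [F] at the jet
   [(x, Dphi x, D2phi x)] by [0].  Each of the three terms of [F] is a minorant
   of [F] that is itself lower semicontinuous at that jet, hence is [<= 0]:
   [H (Dphi x)] by continuity of [H]; [- lambda1] because [lambda1] is upper
   semicontinuous on symmetric matrices (test the Rayleigh quotient at an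
   eigenvector); and the Monge-Ampere term because [g >= 0] is usc, [f] is lsc
   and [det] is continuous, provided [det (D2phi x) >= 0].  This last fact
   holds because the envelope forces [D2phi x] to be symmetric, and then
   [lambda1 (D2phi x) >= 0] makes it positive semidefinite. *)

From Pilot Require Import Defs.
From HB Require Import structures.
From Stdlib Require Import Reals Lra Psatz Classical ClassicalEpsilon.
From mathcomp Require Import all_boot all_algebra fingroup perm.
Import GRing.Theory.
Local Open Scope R_scope.

(* [Defs] only makes [R] a commutative ring; [det0P] needs a field. *)
Definition RF := R.
HB.instance Definition _ := GRing.ComNzRing.on RF.
Lemma RF_mulVf (x : RF) : (x != 0)%R -> (Rinv x * x = 1)%R.
Proof. by move=> /eqP h; change (/ x * x = 1); field. Qed.
Lemma RF_inv0 : Rinv (0 : RF) = 0. Proof. exact: Rinv_0. Qed.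
HB.instance Definition _ := GRing.ComNzRing_isField.Build RF RF_mulVf RF_inv0.

Lemma RaddE (x y : R) : (x + y)%R = Rplus x y. Proof. by []. Qed.
Lemma RmulE (x y : R) : (x * y)%R = Rmult x y. Proof. by []. Qed.
Lemma RoppE (x : R) : (- x)%R = Ropp x. Proof. by []. Qed.
Lemma R0E : (0%R : R) = 0. Proof. by []. Qed.
Lemma R1E : (1%R : R) = 1. Proof. by []. Qed.
Definition RE := (RaddE, RmulE, RoppE, R0E, R1E).

(* Matrix entries may be typed at [RF] or [R]; [ring] only sees them as the
   same atom after retyping them all at [R]. *)
Ltac Rring :=
  rewrite ?RE; match goal with |- @eq _ ?a ?b => change (@eq R a b) end;
  repeat match goal with
  | |- context [@fun_of_matrix ?T ?m ?k ?A ?i ?j] =>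
      tryif constr_eq T R then fail
      else change (@fun_of_matrix T m k A i j) with (@fun_of_matrix R m k A i j)
  end; ring.

Section RealSums.
Variables (I : Type) (r : seq I) (P : pred I).

Lemma Rsum_ge0 (F : I -> R) : (forall i, P i -> 0 <= F i) ->
  0 <= (\sum_(i <- r | P i) F i)%R.
Proof.
move=> h; apply: (big_ind (fun x : R => 0 <= x)).
- rewrite RE; lra.
- by move=> x y hx hy; rewrite RE; lra.
- exact: h.
Qed.

Lemma Rsum_le (F G : I -> R) : (forall i, P i -> F i <= G i) ->
  (\sum_(i <- r | P i) F i)%R <= (\sum_(i <- r | P i) G i)%R.
Proof.
move=> h; apply: (big_ind2 (fun x y : R => x <= y)).
- rewrite RE; lra.
- by move=> x1 x2 y1 y2 h1 h2; rewrite !RE; lra.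
- exact: h.
Qed.

Lemma Rabs_sum_le (F : I -> R) :
  Rabs (\sum_(i <- r | P i) F i)%R <= (\sum_(i <- r | P i) Rabs (F i))%R.
Proof.
apply: (big_ind2 (fun x y : R => Rabs x <= y)).
- rewrite RE Rabs_R0; lra.
- move=> x1 x2 y1 y2 h1 h2; rewrite !RE.
  apply: Rle_trans (Rabs_triang _ _) _; lra.
- move=> i _; lra.
Qed.

End RealSums.

Lemma Rsum_ge_term {n} (F : 'I_n -> R) k : (forall i, 0 <= F i) ->
  F k <= (\sum_(i < n) F i)%R.
Proof.
move=> h; rewrite (bigD1 k) //= RaddE.
rewrite -[X in X <= _]Rplus_0_r; apply: Rplus_le_compat_l.
by apply: Rsum_ge0 => i _.
Qed.

Lemma Rsum2_ge_term {n} (F : 'I_n -> 'I_n -> R) i j : (forall i j, 0 <= F i j) ->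
  F i j <= (\sum_(i < n) \sum_(j < n) F i j)%R.
Proof.
move=> h; apply: (Rle_trans _ (\sum_(j < n) F i j)%R); first exact: Rsum_ge_term.
by apply: (Rsum_ge_term (fun i => \sum_(j < n) F i j)%R i) => k; apply: Rsum_ge0.
Qed.

Section QuadraticForms.
Variable n : nat.
Implicit Types (M : 'M[R]_n) (c d : 'cV[R]_n).

Definition sqnorm c : R := (\sum_(i < n) c i ord0 * c i ord0)%R.
Definition bform M c d : R := ((c^T *m (M *m d)) ord0 ord0)%R.
Definition qform M c : R := bform M c c.

Lemma sqnormE c : sqnorm c = ((c^T *m c) ord0 ord0)%R.
Proof. rewrite /sqnorm !mxE; apply: eq_bigr => i _; by rewrite !mxE. Qed.

Lemma bform_sum M c d : bform M c d = (\sum_(i < n) c i ord0 * (M *m d) i ord0)%R.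
Proof. rewrite /bform !mxE; apply: eq_bigr => i _; by rewrite !mxE. Qed.

Lemma sqnorm_ge0 c : 0 <= sqnorm c.
Proof. apply: Rsum_ge0 => i _; rewrite RmulE; nra. Qed.

Lemma sqnorm_ge_term c i : c i ord0 * c i ord0 <= sqnorm c.
Proof.
apply: (Rsum_ge_term (fun i => (c i ord0 * c i ord0)%R) i) => j.
rewrite RmulE; nra.
Qed.

Lemma sqnorm_gt0 {c : 'cV[R]_n} : (c != 0)%R -> 0 < sqnorm c.
Proof.
move=> hc; case: (Rle_lt_or_eq_dec _ _ (sqnorm_ge0 c)) => // h0.
case/eqP: hc; apply/matrixP => i j; rewrite mxE.
have -> : j = ord0 by apply: val_inj; rewrite /= (ord1 j).
have := sqnorm_ge_term c i; rewrite -h0 => hi; change (c i ord0 = 0); nra.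
Qed.

Lemma sqnormZ a c : sqnorm (a *: c)%R = a * a * sqnorm c.
Proof.
rewrite /sqnorm -RmulE mulr_sumr; apply: eq_bigr => i _; rewrite !mxE; Rring.
Qed.

Lemma Rabs_le_sqrt_sqnorm c j : Rabs (c j ord0) <= sqrt (sqnorm c).
Proof.
rewrite -sqrt_Rsqr_abs /Rsqr; apply: sqrt_le_1_alt; exact: sqnorm_ge_term.
Qed.

Lemma bformC M c d : (M^T)%R = M -> bform M c d = bform M d c.
Proof.
move=> hM; rewrite /bform.
have -> : (c^T *m (M *m d) = (d^T *m (M *m c))^T)%R.
  by rewrite !trmx_mul trmxK hM mulmxA.
by rewrite mxE.
Qed.

Lemma bformDl M c1 c2 d : bform M (c1 + c2) d = bform M c1 d + bform M c2 d.
Proof. by rewrite /bform linearD /= mulmxDl mxE. Qed.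

Lemma bformDr M c d1 d2 : bform M c (d1 + d2) = bform M c d1 + bform M c d2.
Proof. by rewrite /bform mulmxDr mulmxDr mxE. Qed.

Lemma bformZl M a c d : bform M (a *: c) d = a * bform M c d.
Proof. by rewrite /bform linearZ /= -scalemxAl mxE. Qed.

Lemma bformZr M a c d : bform M c (a *: d) = a * bform M c d.
Proof. by rewrite /bform -scalemxAr -scalemxAr mxE. Qed.

Lemma qformDZ M c d t : (M^T)%R = M ->
  qform M (c + t *: d) = qform M c + 2 * t * bform M c d + t * t * qform M d.
Proof.
move=> hM; rewrite /qform bformDl !bformDr !bformZl !bformZr (bformC _ d c hM).
Rring.
Qed.

Lemma qform_eigen {M : 'M[R]_n} {mu : R} {v : 'cV[R]_n} : (M *m v = mu *: v)%R -> qform M v = mu * sqnorm v.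
Proof. by move=> h; rewrite /qform /bform h -scalemxAr mxE sqnormE. Qed.

Lemma qform_subr_scalar M m c : qform (M - m%:M)%R c = qform M c - m * sqnorm c.
Proof.
rewrite /qform /bform sqnormE mulmxBl mul_scalar_mx mulmxBr -scalemxAr !mxE.
Rring.
Qed.

Lemma qform_affine_id M t c :
  qform ((1 - t) *: M + t *: 1%:M)%R c = (1 - t) * qform M c + t * sqnorm c.
Proof.
rewrite /qform /bform sqnormE mulmxDl -!scalemxAl mul1mx mulmxDr -!scalemxAr !mxE.
Rring.
Qed.

Lemma bform_Cauchy_Schwarz M c d : (M^T)%R = M -> (forall e, 0 <= qform M e) ->
  bform M c d * bform M c d <= qform M c * qform M d.
Proof.
move=> hM hpsd.
set b := bform M c d; set qc := qform M c; set qd := qform M d.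
have h t : 0 <= qc + 2 * t * b + t * t * qd.
  by rewrite /qc /qd /b -qformDZ //; apply: hpsd.
have hqc : 0 <= qc by apply: hpsd.
case: (Rle_lt_or_eq_dec _ _ (hpsd d)) => hq; rewrite -/qd in hq.
- have := h (- b / qd).
  have -> : qc + 2 * (- b / qd) * b + - b / qd * (- b / qd) * qd
           = (qc * qd - b * b) / qd by field; lra.
  move=> hh; have : 0 <= (qc * qd - b * b) / qd * qd by nra.
  have -> : (qc * qd - b * b) / qd * qd = qc * qd - b * b by field; lra.
  lra.
- rewrite -hq in h *.
  case: (Req_dec b 0) => hb; first by rewrite hb; nra.
  have := h (- (qc + 1) / (2 * b)).
  have -> : qc + 2 * (- (qc + 1) / (2 * b)) * b
            + - (qc + 1) / (2 * b) * (- (qc + 1) / (2 * b)) * 0 = -1 by field.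
  lra.
Qed.

Definition mx_abs_sum M : R := (\sum_(i < n) \sum_(j < n) Rabs (M i j))%R.

Definition mx_row_abs_sum2 M : R :=
  (\sum_(i < n) (\sum_(j < n) Rabs (M i j)) * (\sum_(j < n) Rabs (M i j)))%R.

Lemma mx_abs_sum_ge0 M : 0 <= mx_abs_sum M.
Proof. apply: Rsum_ge0 => i _; apply: Rsum_ge0 => j _; exact: Rabs_pos. Qed.

Lemma Rabs_entry_le_mx_abs_sum M i j : Rabs (M i j) <= mx_abs_sum M.
Proof. exact: (Rsum2_ge_term (fun i j => Rabs (M i j)) i j (fun _ _ => Rabs_pos _)). Qed.

Lemma mx_row_abs_sum2_ge0 M : 0 <= mx_row_abs_sum2 M.
Proof.
apply: Rsum_ge0 => i _; rewrite RmulE.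
have : 0 <= (\sum_(j < n) Rabs (M i j))%R by apply: Rsum_ge0 => j _; exact: Rabs_pos.
nra.
Qed.

Lemma Rabs_qform_le M c : Rabs (qform M c) <= mx_abs_sum M * sqnorm c.
Proof.
rewrite /qform bform_sum.
have -> : (\sum_(i < n) c i ord0 * (M *m c) i ord0)%R =
          (\sum_(i < n) \sum_(j < n) M i j * (c i ord0 * c j ord0))%R.
  apply: eq_bigr => i _; rewrite mxE mulr_sumr; apply: eq_bigr => j _; Rring.
apply: Rle_trans (Rabs_sum_le _ _ _ _) _.
rewrite /mx_abs_sum -RmulE mulr_suml; apply: Rsum_le => i _.
apply: Rle_trans (Rabs_sum_le _ _ _ _) _.
rewrite mulr_suml; apply: Rsum_le => j _.
rewrite RmulE !Rabs_mult; apply: Rmult_le_compat_l; first exact: Rabs_pos.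
have hi := sqnorm_ge_term c i; have hj := sqnorm_ge_term c j.
have e k : c k ord0 * c k ord0 = Rabs (c k ord0) * Rabs (c k ord0).
  by rewrite -Rabs_mult Rabs_right //; nra.
rewrite e in hi; rewrite e in hj.
have := Rle_0_sqr (Rabs (c i ord0) - Rabs (c j ord0)); rewrite /Rsqr; nra.
Qed.

Lemma sqnorm_mulmx_le M c : sqnorm (M *m c)%R <= mx_row_abs_sum2 M * sqnorm c.
Proof.
rewrite {1}/sqnorm /mx_row_abs_sum2 -RmulE mulr_suml; apply: Rsum_le => i _.
set a := (\sum_(j < n) Rabs (M i j))%R.
set s := sqrt (sqnorm c).
have hs : s * s = sqnorm c by rewrite /s sqrt_sqrt //; exact: sqnorm_ge0.
have hs0 : 0 <= s by exact: sqrt_pos.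
have ha : 0 <= a by apply: Rsum_ge0 => j _; exact: Rabs_pos.
have h1 : Rabs ((M *m c)%R i ord0) <= a * s.
  rewrite mxE; apply: Rle_trans (Rabs_sum_le _ _ _ _) _.
  rewrite /a -RmulE mulr_suml; apply: Rsum_le => j _.
  rewrite RmulE Rabs_mult; apply: Rmult_le_compat_l; first exact: Rabs_pos.
  exact: Rabs_le_sqrt_sqnorm.
have h0 := Rabs_pos ((M *m c)%R i ord0).
have -> : ((M *m c) i ord0 * (M *m c) i ord0)%R
          = Rabs ((M *m c)%R i ord0) * Rabs ((M *m c)%R i ord0).
  by rewrite RmulE -Rabs_mult Rabs_right //; apply: Rle_ge; nra.
rewrite -hs !RmulE.
have := Rmult_le_compat _ _ _ _ h0 h0 h1 h1; nra.
Qed.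

Lemma exists_nonzero_col : (0 < n)%N -> exists c : 'cV[R]_n, (c != 0)%R.
Proof.
move=> hn; exists (const_mx 1)%R; apply/eqP => /matrixP /(_ (Ordinal hn) ord0).
rewrite !mxE R1E R0E; lra.
Qed.

Lemma det0_kernel {M : 'M[R]_n} : (\det M)%R = 0 -> exists c, (c != 0)%R /\ (M *m c = 0)%R.
Proof.
move=> hdet.
have [w hw0 hwM] : exists2 w : 'rV[R]_n, (w != 0)%R & (w *m M^T)%R = 0%R.
  by apply: (elimT (@det0P RF n (M^T)%R)); rewrite det_tr; apply/eqP.
exists (w^T)%R; split.
  by apply: contra hw0 => /eqP h; rewrite -[w]trmxK h trmx0.
by rewrite -[M]trmxK -trmx_mul hwM trmx0.
Qed.

(* Positive semidefinite and invertible implies coercive: the adjugate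
   recovers [c] from [M c], and Cauchy-Schwarz bounds [|M c|^2] by [qform M c]. *)
Lemma qform_coercive {M : 'M[R]_n} : (M^T)%R = M -> (forall c, 0 <= qform M c) ->
  (\det M)%R <> 0 -> exists k, 0 < k /\ forall c, k * sqnorm c <= qform M c.
Proof.
move=> hM hpsd hdet.
set d := (\det M)%R; set KA := mx_row_abs_sum2 (\adj M)%R; set K := mx_abs_sum M.
have hKA : 0 <= KA by apply: mx_row_abs_sum2_ge0.
have hK : 0 <= K by apply: mx_abs_sum_ge0.
have hd : 0 < d * d by exact: (Rsqr_pos_lt _ hdet).
exists (d * d / (KA * K + 1)); split; first by apply: Rdiv_lt_0_compat; nra.
move=> c; set u := (M *m c)%R.
have h2 := bform_Cauchy_Schwarz M c u hM hpsd.
rewrite (_ : bform M c u = sqnorm u) in h2; last by rewrite bformC // sqnormE.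
have h3 : qform M u <= K * sqnorm u.
  apply: Rle_trans (Rle_abs _) _; exact: Rabs_qform_le.
have hqc := hpsd c.
have hsu := sqnorm_ge0 u.
have h4 : sqnorm u <= K * qform M c.
  case: (Rle_lt_or_eq_dec _ _ hsu) => hu; last by rewrite -hu; nra.
  apply: (Rmult_le_reg_r (sqnorm u)) => //; nra.
have h5 : ((\adj M) *m u = d *: c)%R by rewrite /u mulmxA mul_adj_mx mul_scalar_mx.
have h6 := sqnorm_mulmx_le (\adj M)%R u; rewrite h5 sqnormZ -/KA in h6.
have h7 : d * d * sqnorm c <= (KA * K + 1) * qform M c by nra.
apply: (Rmult_le_reg_r (KA * K + 1)); first nra.
have -> : d * d / (KA * K + 1) * sqnorm c * (KA * K + 1) = d * d * sqnorm c.
  by field; nra.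
lra.
Qed.

Definition rayleigh_lb M (t : R) : Prop := forall c, t * sqnorm c <= qform M c.

Lemma exists_max_rayleigh_lb M : (0 < n)%N ->
  exists m, rayleigh_lb M m /\ forall t, rayleigh_lb M t -> t <= m.
Proof.
move=> hn.
have hlow c : - mx_abs_sum M * sqnorm c <= qform M c.
  have := Rabs_qform_le M c; have := Rle_abs (- qform M c); rewrite Rabs_Ropp; lra.
have [c1 hc1] := exists_nonzero_col hn.
have hs1 := sqnorm_gt0 hc1.
have hbd : bound (rayleigh_lb M).
  exists (qform M c1 / sqnorm c1) => t ht.
  apply: (Rmult_le_reg_r (sqnorm c1)) => //.
  have -> : qform M c1 / sqnorm c1 * sqnorm c1 = qform M c1 by field; lra.
  exact: ht.
have [m [hub hlub]] := completeness _ hbd (ex_intro _ _ hlow).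
exists m; split => [c|t /hub //].
apply: Rnot_lt_le => hlt.
have hsc : 0 < sqnorm c.
  case: (Rle_lt_or_eq_dec _ _ (sqnorm_ge0 c)) => // h0.
  have := hlow c; rewrite -h0 in hlt *; lra.
have hq : qform M c / sqnorm c < m.
  apply: (Rmult_lt_reg_r (sqnorm c)) => //.
  by have -> : qform M c / sqnorm c * sqnorm c = qform M c by field; lra.
have : m <= qform M c / sqnorm c.
  apply: hlub => t ht; apply: (Rmult_le_reg_r (sqnorm c)) => //.
  have -> : qform M c / sqnorm c * sqnorm c = qform M c by field; lra.
  exact: ht.
lra.
Qed.

(* The best Rayleigh lower bound [m] is an eigenvalue: [M - m] is positive
   semidefinite but not coercive, hence singular. *)
Lemma exists_min_eigenvalue {M : 'M[R]_n} : (0 < n)%N -> (M^T)%R = M ->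
  exists m, Defs.eigenvalue M m /\ (forall mu, Defs.eigenvalue M mu -> m <= mu) /\
    rayleigh_lb M m.
Proof.
move=> hn hM.
have [m [hm hmax]] := exists_max_rayleigh_lb M hn.
have hsym : ((M - m%:M)^T)%R = (M - m%:M)%R by rewrite linearB /= tr_scalar_mx hM.
have hpsd c : 0 <= qform (M - m%:M)%R c.
  by rewrite qform_subr_scalar; have := hm c; lra.
have hdet : (\det (M - m%:M))%R = 0.
  apply: NNPP => hd.
  have [k [hk hkq]] := qform_coercive hsym hpsd hd.
  suff /hmax : rayleigh_lb M (m + k) by lra.
  by move=> c; have := hkq c; rewrite qform_subr_scalar; lra.
have [v [hv0 hv]] := det0_kernel hdet.
exists m; split; [|split] => //.
  exists v; split => //.
  by move: hv; rewrite mulmxBl mul_scalar_mx => /subr0_eq.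
move=> mu [v' [hv' hMv']].
have := hm v'; rewrite (qform_eigen hMv') => h.
by apply: (Rmult_le_reg_r (sqnorm v')) => //; exact: sqnorm_gt0.
Qed.

Lemma lambda1_spec {M : 'M[R]_n} : (0 < n)%N -> (M^T)%R = M ->
  Defs.eigenvalue M (lambda1 M) /\ rayleigh_lb M (lambda1 M).
Proof.
move=> hn hM; have [m [he [hmin hq]]] := exists_min_eigenvalue hn hM.
have [he' hmin'] := @epsilon_spec R (inhabits 0)
  (fun l => Defs.eigenvalue M l /\ forall mu, Defs.eigenvalue M mu -> l <= mu)
  (ex_intro _ m (conj he hmin)).
have -> : lambda1 M = m by apply: Rle_antisym; [apply: hmin' | apply: hmin].
by split.
Qed.

End QuadraticForms.
Arguments sqnorm {n}. Arguments qform {n}. Arguments mx_abs_sum {n}.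
Arguments sqnorm_ge0 {n}. Arguments sqnorm_gt0 {n c}. Arguments qform_eigen {n M mu v}.
Arguments det0_kernel {n M}. Arguments lambda1_spec {n M}.
Arguments qform_affine_id {n}. Arguments mx_abs_sum_ge0 {n}. Arguments Rabs_entry_le_mx_abs_sum {n}.

Section EntrywiseContinuity.
Variables (n : nat) (A : 'M[R]_n).

Definition mx_cont_at (F : 'M[R]_n -> R) : Prop :=
  forall eps, 0 < eps -> exists del, 0 < del /\
    forall B : 'M[R]_n, (forall i j, Rabs (B i j - A i j) < del) -> Rabs (F B - F A) < eps.

Lemma mx_cont_at_ext {F G : 'M[R]_n -> R} : mx_cont_at F -> (forall B, F B = G B) -> mx_cont_at G.
Proof.
move=> h e eps he; have [d [hd h2]] := h eps he; exists d; split => // B hB.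
rewrite -!e; exact: h2.
Qed.

Lemma mx_cont_at_const a : mx_cont_at (fun _ => a).
Proof.
by move=> eps he; exists 1; split => [|B _]; [lra | rewrite Rminus_diag Rabs_R0].
Qed.

Lemma mx_cont_at_entry i j : mx_cont_at (fun B => B i j).
Proof. by move=> eps he; exists eps; split => // B; apply. Qed.

Lemma mx_cont_at_add {F G : 'M[R]_n -> R} :
  mx_cont_at F -> mx_cont_at G -> mx_cont_at (fun B => F B + G B)%R.
Proof.
move=> hF hG eps he.
have [d1 [hd1 h1]] := hF (eps / 2) ltac:(lra).
have [d2 [hd2 h2]] := hG (eps / 2) ltac:(lra).
exists (Rmin d1 d2); split; first by apply: Rmin_pos.
move=> B hB.
have := h1 B (fun i j => Rlt_le_trans _ _ _ (hB i j) (Rmin_l _ _)).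
have := h2 B (fun i j => Rlt_le_trans _ _ _ (hB i j) (Rmin_r _ _)).
rewrite !RaddE => e2 e1.
have -> : F B + G B - (F A + G A) = (F B - F A) + (G B - G A) by ring.
apply: Rle_lt_trans (Rabs_triang _ _) _; lra.
Qed.

Lemma mx_cont_at_mul {F G : 'M[R]_n -> R} :
  mx_cont_at F -> mx_cont_at G -> mx_cont_at (fun B => F B * G B)%R.
Proof.
move=> hF hG eps he.
set a := Rabs (F A); set b := Rabs (G A).
have ha : 0 <= a := Rabs_pos _; have hb : 0 <= b := Rabs_pos _.
set e1 := eps / (2 * (b + 2)); set e2 := eps / (2 * (a + 1)).
have he1 : e1 * (b + 2) = eps / 2 by rewrite /e1; field; lra.
have he2 : e2 * (a + 1) = eps / 2 by rewrite /e2; field; lra.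
have [d1 [hd1 h1]] := hF e1 ltac:(apply: Rdiv_lt_0_compat; lra).
have [d2 [hd2 h2]] := hG (Rmin 1 e2)
  ltac:(apply: Rmin_pos; [lra | apply: Rdiv_lt_0_compat; lra]).
exists (Rmin d1 d2); split; first by apply: Rmin_pos.
move=> B hB.
have k1 := h1 B (fun i j => Rlt_le_trans _ _ _ (hB i j) (Rmin_l _ _)).
have k2 := h2 B (fun i j => Rlt_le_trans _ _ _ (hB i j) (Rmin_r _ _)).
have [k21 k22] := (Rlt_le_trans _ _ _ k2 (Rmin_l _ _), Rlt_le_trans _ _ _ k2 (Rmin_r _ _)).
rewrite !RmulE.
have -> : F B * G B - F A * G A = (F B - F A) * G B + F A * (G B - G A) by ring.
apply: Rle_lt_trans (Rabs_triang _ _) _; rewrite !Rabs_mult -/a.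
have hy : Rabs (G B) <= b + 1.
  by have := Rabs_triang_inv (G B) (G A); rewrite -/b; lra.
have := Rmult_le_compat _ _ _ _ (Rabs_pos _) (Rabs_pos _) (Rlt_le _ _ k1) hy.
have := Rmult_le_compat_l _ _ _ ha (Rlt_le _ _ k22).
have := Rabs_pos (F B - F A); nra.
Qed.

Lemma mx_cont_at_sum (I : Type) (r : seq I) (P : pred I) (F : I -> 'M[R]_n -> R) :
  (forall i, mx_cont_at (F i)) -> mx_cont_at (fun B => \sum_(i <- r | P i) F i B)%R.
Proof.
move=> h; elim: r => [|x r IH].
  by apply: (mx_cont_at_ext (mx_cont_at_const 0%R)) => B; rewrite big_nil.
case hx: (P x).
  by apply: (mx_cont_at_ext (mx_cont_at_add (h x) IH)) => B; rewrite big_cons hx.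
by apply: (mx_cont_at_ext IH) => B; rewrite big_cons hx.
Qed.

Lemma mx_cont_at_prod (I : Type) (r : seq I) (P : pred I) (F : I -> 'M[R]_n -> R) :
  (forall i, mx_cont_at (F i)) -> mx_cont_at (fun B => \prod_(i <- r | P i) F i B)%R.
Proof.
move=> h; elim: r => [|x r IH].
  by apply: (mx_cont_at_ext (mx_cont_at_const 1%R)) => B; rewrite big_nil.
case hx: (P x).
  by apply: (mx_cont_at_ext (mx_cont_at_mul (h x) IH)) => B; rewrite big_cons hx.
by apply: (mx_cont_at_ext IH) => B; rewrite big_cons hx.
Qed.

Lemma mx_cont_at_det : mx_cont_at (fun B => \det B)%R.
Proof.
apply: mx_cont_at_sum => s; apply: mx_cont_at_mul; first exact: mx_cont_at_const.
by apply: mx_cont_at_prod => i; exact: mx_cont_at_entry.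
Qed.

Lemma mx_cont_at_qform c : mx_cont_at (fun B => qform B c).
Proof.
apply: (@mx_cont_at_ext (fun B => \sum_i c i ord0 * \sum_j B i j * c j ord0)%R).
  apply: mx_cont_at_sum => i; apply: mx_cont_at_mul; first exact: mx_cont_at_const.
  apply: mx_cont_at_sum => j; apply: mx_cont_at_mul;
    [exact: mx_cont_at_entry | exact: mx_cont_at_const].
by move=> B; rewrite /qform bform_sum; apply: eq_bigr => i _; rewrite mxE.
Qed.

End EntrywiseContinuity.
Arguments mx_cont_at_det {n}. Arguments mx_cont_at_qform {n}.

Lemma Rabs_entry_le_mnorm {n} (M : 'M[R]_n) i j : Rabs (M i j) <= mnorm M.
Proof.
rewrite -sqrt_Rsqr_abs /Rsqr /mnorm; apply: sqrt_le_1_alt.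
by apply: (Rsum2_ge_term (fun i j => M i j * M i j)%R i j) => k l; rewrite RmulE; nra.
Qed.

Lemma mnorm_lt_entry {n} {A B : 'M[R]_n} {d : R} : mnorm (B - A)%R < d ->
  forall i j, Rabs (B i j - A i j) < d.
Proof.
move=> h i j; apply: Rle_lt_trans h.
by have := Rabs_entry_le_mnorm (B - A)%R i j; rewrite !mxE.
Qed.

Lemma continuity_det_segment_id {n} (M : 'M[R]_n) :
  continuity (fun t => \det ((1 - t) *: M + t *: 1%:M))%R.
Proof.
move=> t0 eps he.
have [del [hdel h]] := mx_cont_at_det ((1 - t0) *: M + t0 *: 1%:M)%R eps he.
have hK := mx_abs_sum_ge0 M.
exists (del / (mx_abs_sum M + 1)); split; first by apply: Rdiv_lt_0_compat; lra.
move=> t [_ ht]; rewrite /= /Rdist in ht *; apply: h => i j; rewrite !mxE.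
rewrite (_ : _ - _ = (t - t0) * ((i == j)%:R - M i j)%R); last first.
  by case: (i == j); rewrite ?mulr1n ?mulr0n; Rring.
rewrite Rabs_mult.
have hij : Rabs ((i == j)%:R - M i j)%R <= mx_abs_sum M + 1.
  rewrite RaddE RoppE; apply: Rle_trans (Rabs_triang _ _) _; rewrite Rabs_Ropp.
  have := Rabs_entry_le_mx_abs_sum M i j.
  by case: (i == j); rewrite ?R1E ?R0E ?Rabs_R1 ?Rabs_R0; lra.
have : Rabs (t - t0) * (mx_abs_sum M + 1) < del.
  have -> : del = del / (mx_abs_sum M + 1) * (mx_abs_sum M + 1) by field; lra.
  by apply: Rmult_lt_compat_r; lra.
have := Rmult_le_compat_l _ _ _ (Rabs_pos (t - t0)) hij; lra.
Qed.

(* Along the segment from [M] to the identity the determinant cannot vanish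
   after time [0], because [(1 - t) M + t] is then positive definite; so by the
   intermediate value theorem it cannot start negative. *)
Lemma det_ge0_psd {n} {M : 'M[R]_n} : (M^T)%R = M -> (forall c, 0 <= qform M c) ->
  0 <= (\det M)%R.
Proof.
move=> hM hpsd; apply: Rnot_lt_le => hneg.
pose Mt t := ((1 - t) *: M + t *: 1%:M)%R.
have f0 : (\det (Mt 0))%R = (\det M)%R by rewrite /Mt subr0 scale1r scale0r addr0.
have f1 : (\det (Mt 1))%R = 1 by rewrite /Mt subrr scale0r add0r scale1r det1.
have [z [[hz0 hz1] hfz]] := IVT _ 0 1 (continuity_det_segment_id M) ltac:(lra)
  ltac:(by cbv beta; rewrite f0) ltac:(cbv beta; rewrite f1; lra).
have hz : 0 < z.
  by case: (Rle_lt_or_eq_dec _ _ hz0) => // hz; rewrite -hz f0 in hfz; lra.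
have [c [hc hMc]] := det0_kernel hfz.
have : qform (Mt z) c = 0 by rewrite /qform /bform hMc mulmx0 mxE.
rewrite qform_affine_id.
have := hpsd c; have := sqnorm_gt0 hc; nra.
Qed.

Lemma strict_local_max_local_max {n} {X : vec n -> Prop} {w : vec n -> R} {x} :
  strict_local_max_at X w x -> local_max_at X w x.
Proof.
move=> [r [hr hs]]; exists r; split => // y hy hd.
by case: (classic (y = x)) => [->|hne]; [lra | apply/Rlt_le/hs].
Qed.

Section Envelope.
Variables (n : nat) (X : vec n -> Prop) (x p : vec n) (A : 'M[R]_n).

(* Lower semicontinuity at the jet [(x, p, A)], among the jets over which the
   envelope [lsc_envelope_le] takes its infimum. *)
Definition jet_lsc_at (G : vec n -> vec n -> 'M[R]_n -> R) : Prop :=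
  forall eps, 0 < eps -> exists delta, 0 < delta /\
    forall (y q : vec n) (B : 'M[R]_n), X y -> Defs.symmetric B ->
      Defs.dist y x < delta -> Defs.dist q p < delta ->
      mnorm (B - A)%R < delta -> G x p A - eps < G y q B.

Lemma lsc_envelope_le_minorant F G c :
  lsc_envelope_le X F x p A c -> (forall y q B, G y q B <= F y q B) ->
  jet_lsc_at G -> G x p A <= c.
Proof.
move=> env hGF hG; apply: Rnot_lt_le => hlt.
have he : 0 < (G x p A - c) / 2 by lra.
have [del [hdel hnear]] := hG _ he.
have [y [q [B [hy [hB [hyx [hqp [hBA hF]]]]]]]] := env del _ hdel he.
by have := hnear y q B hy hB hyx hqp hBA; have := hGF y q B; lra.
Qed.

Lemma lsc_envelope_symmetric F c : lsc_envelope_le X F x p A c -> (A^T)%R = A.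
Proof.
move=> env; apply/matrixP => i j; rewrite mxE; apply: NNPP => hne.
have hpos : 0 < Rabs (A j i - A i j) by apply: Rabs_pos_lt => h; apply: hne; lra.
have [y [q [B [_ [hB [_ [_ [hBA _]]]]]]]] :=
  env (Rabs (A j i - A i j) / 3) 1 ltac:(lra) Rlt_0_1.
have h1 := mnorm_lt_entry hBA i j; have h2 := mnorm_lt_entry hBA j i.
have hBij : B i j = B j i by rewrite -{1}hB mxE.
rewrite hBij in h1.
have : Rabs (A j i - A i j) <= Rabs (B j i - A i j) + Rabs (B j i - A j i).
  have -> : A j i - A i j = (B j i - A i j) - (B j i - A j i) by ring.
  by apply: Rle_trans (Rabs_triang _ _) _; rewrite Rabs_Ropp; lra.
lra.
Qed.

Lemma jet_lsc_continuous_grad (H : vec n -> R) :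
  continuous_on whole H -> jet_lsc_at (fun _ q _ => H q).
Proof.
move=> hH eps he; have [d [hd h]] := hH p I eps he.
exists d; split => // y q B _ _ _ hq _.
by have [_ ?] := Rabs_def2 _ _ (h q I hq); lra.
Qed.

(* An eigenvector [v] of [A] for [lambda1 A] bounds [lambda1 B] from above
   through the Rayleigh quotient of [B] at [v]. *)
Lemma jet_lsc_neg_lambda1 : (0 < n)%N -> (A^T)%R = A ->
  jet_lsc_at (fun _ _ B => - lambda1 B).
Proof.
move=> hn hA eps he.
have [[v [hv hAv]] _] := lambda1_spec hn hA.
have hs := sqnorm_gt0 hv.
have [del [hdel hcont]] :=
  mx_cont_at_qform A v (eps * sqnorm v) (Rmult_lt_0_compat _ _ he hs).
exists del; split => // y q B _ hB _ _ hBA.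
have [_ hray] := lambda1_spec hn hB.
have [h2 _] := Rabs_def2 _ _ (hcont B (mnorm_lt_entry hBA)).
rewrite (qform_eigen hAv) in h2.
have : lambda1 B * sqnorm v < (lambda1 A + eps) * sqnorm v by have := hray v; nra.
move/(Rmult_lt_reg_r _ _ _ hs); lra.
Qed.

Lemma jet_lsc_monge_ampere (f g : vec n -> R) :
  X x -> lsc_on X f -> usc_on whole g -> (forall q, 0 <= g q) -> 0 <= (\det A)%R ->
  jet_lsc_at (fun y q B => - g q * (\det B)%R + f y).
Proof.
move=> hx flsc gusc g_ge0 hD eps he.
set G := g p; set D := (\det A)%R in hD *.
have hG : 0 <= G := g_ge0 p.
set eta := Rmin 1 (eps / (G + D + 3)).
have heta : 0 < eta by apply: Rmin_pos; [lra | apply: Rdiv_lt_0_compat; lra].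
have eta1 : eta <= 1 := Rmin_l _ _.
have eta_eps : eta * (G + D + 3) <= eps.
  have := Rmult_le_compat_r (G + D + 3) _ _ ltac:(lra) (Rmin_r 1 (eps / (G + D + 3))).
  by have -> : eps / (G + D + 3) * (G + D + 3) = eps by field; lra.
have [dg [hdg hgq]] := gusc p I eta heta.
have [df [hdf hfy]] := flsc x hx eta heta.
have [dd [hdd hdet]] := mx_cont_at_det A eta heta.
exists (Rmin dg (Rmin df dd)); split; first by repeat apply: Rmin_pos.
move=> y q B hy _ hyx hqp hBA.
have [hdg' [hdf' hdd']] : dg >= Rmin dg (Rmin df dd) /\ df >= Rmin dg (Rmin df dd)
    /\ dd >= Rmin dg (Rmin df dd).
  by have := Rmin_l dg (Rmin df dd); have := Rmin_r dg (Rmin df dd);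
     have := Rmin_l df dd; have := Rmin_r df dd; lra.
have k1 : g q < G + eta by apply: hgq => //; lra.
have k2 : f x - eta < f y by apply: hfy => //; lra.
have [k3 _] := Rabs_def2 _ _
  (hdet B (fun i j => Rlt_le_trans _ _ _ (mnorm_lt_entry hBA i j) (Rge_le _ _ hdd'))).
rewrite -/D in k3.
have hgq0 := g_ge0 q.
have k4 : g q * (\det B)%R <= (G + eta) * (D + eta).
  case: (Rle_lt_dec (\det B)%R 0) => hdb; first by nra.
  by apply: Rmult_le_compat; lra.
have : (G + eta) * (D + eta) <= G * D + eta * (G + D + 1) by nra.
lra.
Qed.

End Envelope.
Arguments lsc_envelope_le_minorant {n X x p A F G c}.
Arguments lsc_envelope_symmetric {n X x p A F c}.
Arguments jet_lsc_continuous_grad {n X x p A H}.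
Arguments jet_lsc_neg_lambda1 {n X x p A}.
Arguments jet_lsc_monge_ampere {n X x p A f g}.

Theorem mainTheorem2 (n : nat) (X Y : vec n -> Prop) (f g H u : vec n -> R)
  (phi : vec n -> R) (Dphi : vec n -> vec n) (D2phi : vec n -> 'M[R]_n) (x : vec n) :
  (0 < n)%N ->
  (* (H1) *)
  convex_bounded_domain X -> convex_bounded_domain Y ->
  (* (H2) *)
  L1_nonneg X f -> lsc_on X f ->
  (* (H3) *)
  L1_nonneg whole g -> (forall y, Y y -> 0 < g y) -> (forall y, ~ Y y -> g y = 0) ->
  usc_on whole g ->
  (* (H4) *)
  (exists I, has_integral X f I /\ has_integral whole g I) ->
  defining_function Y H ->
  viscosity_subsolution X f g H u ->
  is_C2 phi Dphi D2phi ->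
  X x ->
  strict_local_max_at X (fun y => u y - phi y) x ->
  Rmax (Rmax (- g (Dphi x) * (\det (D2phi x))%R + f x) (- lambda1 (D2phi x)))
       (H (Dphi x)) <= 0.
Proof.
move=> hn _ _ _ flsc [g_ge0 _] _ _ gusc _ [Hcont _] [_ hvisc] hC2 hx hmax.
have env := hvisc _ _ _ hC2 x hx (strict_local_max_local_max hmax).
have hA := lsc_envelope_symmetric env.
have hlambda : - lambda1 (D2phi x) <= 0.
  apply: (lsc_envelope_le_minorant env _ (jet_lsc_neg_lambda1 hn hA)).
  by move=> y q B; apply: Rle_trans (Rmax_r _ _) (Rmax_l _ _).
have hdet : 0 <= (\det (D2phi x))%R.
  have [_ hray] := lambda1_spec hn hA.
  apply: (det_ge0_psd hA) => c.
  by have := hray c; have := sqnorm_ge0 c; nra.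
have hMA : - g (Dphi x) * (\det (D2phi x))%R + f x <= 0.
  apply: (lsc_envelope_le_minorant env _
    (jet_lsc_monge_ampere hx flsc gusc (fun q => g_ge0 q I) hdet)).
  by move=> y q B; apply: Rle_trans (Rmax_l _ _) (Rmax_l _ _).
have hH : H (Dphi x) <= 0.
  apply: (lsc_envelope_le_minorant env _ (jet_lsc_continuous_grad Hcont)).
  by move=> y q B; apply: Rmax_r.
by apply: Rmax_lub => //; apply: Rmax_lub.
Qed.
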